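(* Let $\omega\colon\mathbf Z_+\to(0,+\infty)$ be a positive weight, and for $\mu\in\mathbf C$ and $m\ge1$ let \[h_m(\mu,z)=\sum_{n\ge0}\mu^n\big(z^{(6m+4)2^n}-z^{(2m+1)2^n}\big),\qquad h_0(\mu,z)=\sum_{n\ge0}\mu^nz^{2^{n+2}}.\] For every $m\ge0$ and $\mu\in\mathbf C$, $h_m(\mu,\cdot)$ belongs to $\mathcal X_\omega$ if and only if the series $\sum_{n\ge0}|\mu|^{2n}/\omega((2m+1)2^n)$ and $\sum_{n\ge0}|\mu|^{2n}/\omega((6m+4)2^n)$ converge; in this case $\mathcal Th_m(\mu,\cdot)=\mu h_m(\mu,\cdot)$. In particular, if $\omega$ is bounded from below then $h_m(\mu,\cdot)\in\mathcal X_\omega$ for every $m\ge0$ and every $\mu$ in the open unit disk $\mathbf D$; and if $\omega=\omega_0$, where $\omega_0(n)=(n+1)/\pi$, then $h_m(\mu,\cdot)\in\mathcal X_{\omega_0}$ for every $m\ge0$ and every $\mu\in\mathbf C$ with $|\mu|<\sqrt2$.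
   Context: $T\colon\mathbf Z_+\to\mathbf Z_+$ is the modified Collatz map: $T(n)=n/2$ for $n$ even, $T(n)=(3n+1)/2$ for $n$ odd. $\mathcal X_\omega$ is the Hilbert space of holomorphic functions $f(z)=\sum_{n\ge3}c_nz^n$ on the unit disk with $\|f\|_\omega^2=\sum_{n\ge3}|c_n|^2/\omega(n)<\infty$ (the quotient of the weighted Bergman space $\mathcal B^2_\omega$ by $\mathrm{span}[1,z,z^2]$). $\mathcal T$ acts on such power series by $\mathcal T\sum_{n\ge3}c_nz^n=\sum_{j\ge3,\,T(j)\ge3}c_jz^{T(j)}$, i.e. the coefficient of $z^k$ ($k\ge3$) in $\mathcal Tf$ is $\sum_{j\ge3,\,T(j)=k}c_j$. *)

From Stdlib Require Import Reals Arith.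
From Coquelicot Require Import Coquelicot.
Open Scope R_scope.

Definition collatzT (n : nat) : nat :=
  if Nat.even n then (n / 2)%nat else ((3 * n + 1) / 2)%nat.

(* A power series f(z) = sum_n c_n z^n is represented by its coefficient
   sequence c : nat -> C.  Membership in X_omega: no terms of degree < 3,
   holomorphic on the unit disk (radius of convergence >= 1), and
   ||f||^2 = sum_{n>=3} |c_n|^2 / omega(n) < +oo. *)
Definition in_X (omega : nat -> R) (c : nat -> C) : Prop :=
  (forall n, (n < 3)%nat -> c n = RtoC 0) /\
  (forall r, 0 <= r < 1 -> ex_series (fun n => Cmod (c n) * r ^ n)) /\
  ex_series (fun n => (Cmod (c n)) ^ 2 / omega n).

(* The operator T on coefficient sequences: coefficient of z^k (k >= 3)
   of T f is sum_{j >= 3, T(j) = k} c_j.  Every such j satisfies j <= 2k. *)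
Definition Top (c : nat -> C) (k : nat) : C :=
  if (k <? 3)%nat then RtoC 0
  else sum_n (fun j => if andb (3 <=? j)%nat (collatzT j =? k)%nat then c j else RtoC 0)
             (2 * k).

(* Coefficient of z^k in sum_{n>=0} mu^n z^(a 2^n): since a >= 1 and
   a 2^n > n, only indices n <= k can contribute. *)
Definition lac_coef (a : nat) (mu : C) (k : nat) : C :=
  sum_n (fun n => if (k =? a * 2 ^ n)%nat then Cpow mu n else RtoC 0) k.

Definition hcoef (m : nat) (mu : C) (k : nat) : C :=
  match m with
  | O => lac_coef 4 mu k
  | S _ => Cminus (lac_coef (6 * m + 4) mu k) (lac_coef (2 * m + 1) mu k)
  end.

Definition omega0 (n : nat) : R := INR (n + 1) / PI.

From Stdlib Require Import Reals Arith Lia Lra Classical.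
From Coquelicot Require Import Coquelicot.
Open Scope R_scope.

(* The coefficients of h_m(mu, .) live on the progressions (2m+1) * 2^n and (6m+4) * 2^n,
   which are disjoint for m >= 1 (for m = 0 only on 4 * 2^n, and the series over 2^n is a
   shift of the one over 4 * 2^n), and have modulus |mu|^n there.  So the weighted norm is
   the sum of the two series of the statement, and the doubly exponential gaps make
   h_m(mu, .) holomorphic on the disk for every mu.  For the eigenrelation, the
   T-preimages of k are 2k and at most one odd number; doubling an index multiplies the
   coefficient by mu, and the only odd index of the support, 2m+1, is mapped by T to
   3m+2, where its coefficient -1 cancels the coefficient 1 of 6m+4 = 2(3m+2). *)

Lemma sum_n_eq_zero {G : AbelianMonoid} (f : nat -> G) (N : nat) :
  (forall n, (n <= N)%nat -> f n = zero) -> sum_n f N = zero.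
Proof.
  induction N as [|N IH]; intros Hf.
  - rewrite sum_O; apply Hf; lia.
  - rewrite sum_Sn, IH, Hf by first [lia | intros n Hn; apply Hf; lia].
    apply plus_zero_l.
Qed.

Lemma sum_n_single {G : AbelianMonoid} (f : nat -> G) (N p : nat) :
  (p <= N)%nat -> (forall n, (n <= N)%nat -> n <> p -> f n = zero) ->
  sum_n f N = f p.
Proof.
  induction N as [|N IH]; intros Hp Hf.
  - rewrite sum_O. now replace p with 0%nat by lia.
  - rewrite sum_Sn. destruct (Nat.eq_dec p (S N)) as [->|HpN].
    + rewrite sum_n_eq_zero by (intros n Hn; apply Hf; lia). apply plus_zero_l.
    + rewrite IH, (Hf (S N)) by (lia || intros n Hn Hnp; apply Hf; lia).
      apply plus_zero_r.
Qed.

Lemma sum_n_pair {G : AbelianMonoid} (f : nat -> G) (N p q : nat) :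
  (p <= N)%nat -> (q <= N)%nat -> p <> q ->
  (forall n, (n <= N)%nat -> n <> p -> n <> q -> f n = zero) ->
  sum_n f N = plus (f p) (f q).
Proof.
  induction N as [|N IH]; intros Hp Hq Hpq Hf; [lia|].
  rewrite sum_Sn.
  destruct (Nat.eq_dec p (S N)) as [->|HpN]; [|destruct (Nat.eq_dec q (S N)) as [->|HqN]].
  - rewrite (sum_n_single f N q) by (lia || intros n Hn Hnq; apply Hf; lia).
    apply plus_comm.
  - now rewrite (sum_n_single f N p) by (lia || intros n Hn Hnp; apply Hf; lia).
  - rewrite IH, (Hf (S N)) by (lia || intros n Hn Hnp Hnq; apply Hf; lia).
    apply plus_zero_r.
Qed.

Lemma sum_n_gap {G : AbelianMonoid} (f : nat -> G) (M K : nat) :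
  (M < K)%nat -> (forall k, (M < k < K)%nat -> f k = zero) ->
  sum_n f K = plus (sum_n f M) (f K).
Proof.
  induction K as [|K IH]; intros HMK Hf; [lia|].
  rewrite sum_Sn. f_equal.
  destruct (Nat.eq_dec M K) as [->|HM]; [reflexivity|].
  rewrite IH, (Hf K) by (lia || intros k Hk; apply Hf; lia). apply plus_zero_r.
Qed.

Lemma sum_n_nonneg_le (f : nat -> R) (N N' : nat) :
  (forall n, 0 <= f n) -> (N <= N')%nat -> sum_n f N <= sum_n f N'.
Proof.
  intros Hf. induction 1 as [|N' _ IH]; [lra|].
  rewrite sum_Sn. specialize (Hf (S N')). change plus with Rplus. lra.
Qed.

Lemma ex_series_nonneg_iff_bounded (f : nat -> R) :
  (forall n, 0 <= f n) -> ex_series f <-> exists M, forall N, sum_n f N <= M.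
Proof.
  intros Hf.
  assert (Hincr : forall n, sum_n f n <= sum_n f (S n))
    by (intros; apply sum_n_nonneg_le; auto).
  split.
  - intros [l Hl]. exists l. intros N. exact (is_lim_seq_incr_compare _ l Hl Hincr N).
  - intros [M HM]. destruct (ex_finite_lim_seq_incr _ M Hincr HM) as [l Hl]. now exists l.
Qed.

Lemma ex_series_plus_nonneg_iff (f g : nat -> R) :
  (forall n, 0 <= f n) -> (forall n, 0 <= g n) ->
  ex_series (fun n => f n + g n) <-> ex_series f /\ ex_series g.
Proof.
  intros Hf Hg. split.
  - intros Hfg. split; apply (@ex_series_le R_AbsRing R_CompleteNormedModule) with (2 := Hfg);
      intros n; change norm with Rabs;
      specialize (Hf n); specialize (Hg n); rewrite Rabs_pos_eq; lra.
  - intros [Hf' Hg']. exact (@ex_series_plus R_AbsRing R_NormedModule _ _ Hf' Hg').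
Qed.

Section SparseSeries.

Variables (g : nat -> nat) (F u : nat -> R).
Hypothesis g_lt : forall n p, (n < p)%nat -> (g n < g p)%nat.
Hypothesis F_on : forall n, F (g n) = u n.
Hypothesis F_off : forall k, (forall n, k <> g n) -> F k = 0.

Lemma strictly_increasing_le (n p : nat) : (n <= p)%nat -> (g n <= g p)%nat.
Proof.
  intros Hnp. destruct (Nat.eq_dec n p) as [->|Hne]; [lia|].
  specialize (g_lt n p). lia.
Qed.

Lemma sum_n_sparse (N : nat) : sum_n F (g N) = sum_n u N.
Proof.
  induction N as [|N IH].
  - rewrite sum_O, <- F_on. apply sum_n_single; [lia|].
    intros k Hk Hk0. apply F_off. intros p ->. specialize (strictly_increasing_le 0 p). lia.
  - rewrite sum_Sn, (sum_n_gap F (g N)), IH, F_on; [reflexivity | apply g_lt; lia |].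
    intros k Hk. apply F_off. intros p ->.
    destruct (Nat.le_gt_cases p N) as [Hp|Hp];
      [specialize (strictly_increasing_le p N Hp)
      | specialize (strictly_increasing_le (S N) p Hp)]; lia.
Qed.

Lemma ex_series_sparse_iff : (forall k, 0 <= F k) -> ex_series F <-> ex_series u.
Proof.
  intros HF.
  assert (Hu : forall n, 0 <= u n) by (intros n; rewrite <- F_on; apply HF).
  assert (g_ge : forall N, (N <= g N)%nat).
  { induction N as [|N IH]; [lia|]. specialize (g_lt N (S N)). lia. }
  rewrite (ex_series_nonneg_iff_bounded F HF), (ex_series_nonneg_iff_bounded u Hu).
  split; intros [M HM]; exists M; intros N.
  - rewrite <- sum_n_sparse. apply HM.
  - eapply Rle_trans; [apply (sum_n_nonneg_le F N (g N) HF (g_ge N))|].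
    rewrite sum_n_sparse. apply HM.
Qed.

End SparseSeries.

Lemma pow_le_pow_antitone (s : R) (n p : nat) :
  0 <= s <= 1 -> (n <= p)%nat -> s ^ p <= s ^ n.
Proof.
  intros Hs Hnp. replace p with (n + (p - n))%nat by lia. rewrite pow_add.
  assert (Hsn : 0 <= s ^ n) by (apply pow_le; lra).
  assert (Hle1 : s ^ (p - n) <= 1) by (rewrite <- (pow1 (p - n)); apply pow_incr; lra).
  rewrite <- (Rmult_1_r (s ^ n)) at 2. now apply Rmult_le_compat_l.
Qed.

Lemma is_lim_seq_pow_pow2 (s : R) : 0 <= s < 1 -> is_lim_seq (fun n => s ^ (2 ^ n)) 0.
Proof.
  intros Hs.
  apply (is_lim_seq_le_le (fun _ => 0) (fun n => s ^ (2 ^ n)) (fun n => s ^ n)).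
  - intros n. split; [apply pow_le; lra|].
    apply pow_le_pow_antitone; [lra|]. apply Nat.lt_le_incl, Nat.pow_gt_lin_r; lia.
  - apply is_lim_seq_const.
  - apply is_lim_seq_geom. rewrite Rabs_pos_eq; lra.
Qed.

(* Ratio test, run on the positive majorant [(x + 1) ^ n * max(r, 1/2) ^ (2 ^ n)],
   whose ratio [(x + 1) * max(r, 1/2) ^ (2 ^ n)] tends to 0. *)
Lemma ex_series_superexp (x r : R) (g : nat -> nat) :
  0 <= x -> 0 <= r < 1 -> (forall n, 2 ^ n <= g n)%nat ->
  ex_series (fun n => x ^ n * r ^ g n).
Proof.
  intros Hx Hr Hg.
  set (s := Rmax r (1 / 2)). set (M := x + 1).
  assert (Hs : 0 < s < 1).
  { split; [apply Rlt_le_trans with (1 / 2); [lra | apply Rmax_r] | apply Rmax_lub_lt; lra]. }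
  set (w := fun n => M ^ n * s ^ (2 ^ n)).
  assert (Hw : forall n, 0 < w n).
  { intros n. apply Rmult_lt_0_compat; apply pow_lt; unfold M; lra. }
  assert (Hratio : is_lim_seq (fun n => Rabs (w (S n) / w n)) 0).
  { apply (is_lim_seq_ext (fun n => M * s ^ (2 ^ n))).
    - intros n. rewrite Rabs_pos_eq by (apply Rlt_le, Rdiv_lt_0_compat; apply Hw).
      unfold w. rewrite Nat.pow_succ_r', Nat.mul_comm, pow_mult, <- tech_pow_Rmult.
      field. split; apply pow_nonzero; unfold M; lra.
    - replace (Finite 0) with (Rbar_mult M 0) by (simpl; f_equal; ring).
      apply is_lim_seq_scal_l, is_lim_seq_pow_pow2. lra. }
  apply (@ex_series_le R_AbsRing R_CompleteNormedModule) with (b := fun n => Rabs (w n)).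
  - intros n. change norm with Rabs.
    assert (Hxn : 0 <= x ^ n) by (apply pow_le; lra).
    rewrite Rabs_pos_eq by (apply Rmult_le_pos; [|apply pow_le]; lra).
    rewrite Rabs_pos_eq by (apply Rlt_le, Hw).
    apply Rmult_le_compat; [| apply pow_le; lra | apply pow_incr; unfold M; lra |]; [easy|].
    apply Rle_trans with (s ^ g n); [apply pow_incr; split; [lra | apply Rmax_l]|].
    apply pow_le_pow_antitone; [lra | apply Hg].
  - apply (ex_series_DAlembert w 0); [lra | | exact Hratio].
    intros n. specialize (Hw n). lra.
Qed.

Lemma ex_series_geom_weight (omega : nat -> R) (g : nat -> nat) (q b c : R) :
  0 < b -> 0 <= q -> q ^ 2 < c -> (forall n, b * c ^ n <= omega (g n)) ->
  ex_series (fun n => q ^ (2 * n) / omega (g n)).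
Proof.
  intros Hb Hq Hqc Hw.
  assert (Hc : 0 < c) by nra.
  apply (@ex_series_le R_AbsRing R_CompleteNormedModule) with (b := fun n => (q ^ 2 / c) ^ n / b).
  - intros n. change norm with Rabs.
    assert (Hbc : 0 < b * c ^ n) by (apply Rmult_lt_0_compat; [|apply pow_lt]; lra).
    assert (Hq2n : 0 <= q ^ (2 * n)) by (apply pow_le; lra).
    specialize (Hw n).
    rewrite Rabs_pos_eq by (apply Rdiv_le_0_compat; lra).
    replace ((q ^ 2 / c) ^ n / b) with (q ^ (2 * n) / (b * c ^ n))
      by (rewrite pow_mult; unfold Rdiv; rewrite Rpow_mult_distr, pow_inv; field;
          repeat split; first [lra | apply pow_nonzero; lra]).
    apply Rmult_le_compat_l; [lra|]. now apply Rinv_le_contravar.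
  - apply ex_series_scal_r, ex_series_geom.
    rewrite Rabs_pos_eq by (apply Rdiv_le_0_compat; [apply pow2_ge_0 | lra]).
    exact (proj1 (Rdiv_lt_1 _ _ Hc) Hqc).
Qed.

Lemma ex_series_weight_shift (omega : nat -> R) (q : R) (a d : nat) :
  ex_series (fun n => q ^ (2 * n) / omega (2 ^ d * a * 2 ^ n)%nat) ->
  ex_series (fun n => q ^ (2 * n) / omega (a * 2 ^ n)%nat).
Proof.
  intros H. apply (ex_series_incr_n _ d).
  apply (@ex_series_ext R_AbsRing R_NormedModule)
    with (a := fun n => q ^ (2 * n) / omega (2 ^ d * a * 2 ^ n)%nat * q ^ (2 * d)).
  - intros n. rewrite Nat.pow_add_r.
    replace (a * (2 ^ d * 2 ^ n))%nat with (2 ^ d * a * 2 ^ n)%nat by ring.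
    replace (2 * (d + n))%nat with (2 * n + 2 * d)%nat by lia.
    rewrite pow_add. unfold Rdiv. simpl. ring.
  - now apply ex_series_scal_r.
Qed.

Lemma lac_index_lt (a n p : nat) :
  (1 <= a)%nat -> (n < p)%nat -> (a * 2 ^ n < a * 2 ^ p)%nat.
Proof.
  intros Ha Hnp. apply Nat.mul_lt_mono_pos_l; [lia|]. apply Nat.pow_lt_mono_r; lia.
Qed.

Lemma lac_index_ge (a n : nat) : (1 <= a)%nat -> (2 ^ n <= a * 2 ^ n)%nat.
Proof. intros Ha. nia. Qed.

Lemma lac_coef_index (a : nat) (mu : C) (n : nat) :
  (1 <= a)%nat -> lac_coef a mu (a * 2 ^ n) = Cpow mu n.
Proof.
  intros Ha. unfold lac_coef. rewrite (sum_n_single _ _ n).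
  - now rewrite Nat.eqb_refl.
  - pose proof (Nat.pow_gt_lin_r 2 n). pose proof (lac_index_ge a n Ha). lia.
  - intros p _ Hpn. destruct (Nat.eqb_spec (a * 2 ^ n) (a * 2 ^ p)) as [E|E]; [|reflexivity].
    destruct (Nat.lt_total n p) as [H|[H|H]];
      [pose proof (lac_index_lt a _ _ Ha H) | | pose proof (lac_index_lt a _ _ Ha H)]; lia.
Qed.

Lemma lac_coef_base (a : nat) (mu : C) : (1 <= a)%nat -> lac_coef a mu a = 1.
Proof.
  intros Ha. rewrite <- (Nat.mul_1_r a) at 2. exact (lac_coef_index a mu 0 Ha).
Qed.

Lemma lac_coef_off (a : nat) (mu : C) (k : nat) :
  (forall n, k <> (a * 2 ^ n)%nat) -> lac_coef a mu k = 0.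
Proof.
  intros Hk. unfold lac_coef. apply (sum_n_eq_zero (G := C_AbelianMonoid)). intros n _.
  destruct (Nat.eqb_spec k (a * 2 ^ n)) as [E|E]; [now destruct (Hk n) | reflexivity].
Qed.

Lemma lac_coef_lt (a : nat) (mu : C) (k : nat) : (k < a)%nat -> lac_coef a mu k = 0.
Proof.
  intros Hk. apply lac_coef_off. intros n ->. pose proof (Nat.pow_nonzero 2 n). nia.
Qed.

Lemma lac_coef_odd (a : nat) (mu : C) (j : nat) :
  Nat.Odd j -> j <> a -> lac_coef a mu j = 0.
Proof.
  intros [t Ht] Hja. apply lac_coef_off. intros [|n] Hn; [rewrite Nat.mul_1_r in Hn; lia|].
  rewrite Nat.pow_succ_r' in Hn.
  replace (a * (2 * 2 ^ n))%nat with (2 * (a * 2 ^ n))%nat in Hn by ring. lia.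
Qed.

Lemma lac_coef_double (a : nat) (mu : C) (k : nat) :
  (1 <= a)%nat -> (2 * k <> a)%nat -> lac_coef a mu (2 * k) = (mu * lac_coef a mu k)%C.
Proof.
  intros Ha Hk. destruct (classic (exists n, k = (a * 2 ^ n)%nat)) as [[n ->]|Hoff].
  - replace (2 * (a * 2 ^ n))%nat with (a * 2 ^ S n)%nat by (rewrite Nat.pow_succ_r'; ring).
    now rewrite !lac_coef_index.
  - rewrite !lac_coef_off; [ring | |].
    + intros n E. apply Hoff. now exists n.
    + intros [|n] E; [rewrite Nat.mul_1_r in E; lia|].
      apply Hoff. exists n. rewrite Nat.pow_succ_r' in E. lia.
Qed.

Lemma weighted_sq_nonneg (omega : nat -> R) (c : nat -> C) :
  (forall n, (0 < n)%nat -> 0 < omega n) -> c 0%nat = 0 ->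
  forall k, 0 <= Cmod (c k) ^ 2 / omega k.
Proof.
  intros Homega Hc0 [|k].
  - rewrite Hc0, Cmod_0. unfold Rdiv. lra.
  - apply Rdiv_le_0_compat; [apply pow2_ge_0 | apply Homega; lia].
Qed.

Lemma ex_series_lac_coef_sq (omega : nat -> R) (a : nat) (mu : C) :
  (forall n, (0 < n)%nat -> 0 < omega n) -> (1 <= a)%nat ->
  ex_series (fun k => Cmod (lac_coef a mu k) ^ 2 / omega k) <->
  ex_series (fun n => Cmod mu ^ (2 * n) / omega (a * 2 ^ n)%nat).
Proof.
  intros Homega Ha. apply (ex_series_sparse_iff (fun n => a * 2 ^ n)%nat).
  - intros n p. now apply lac_index_lt.
  - intros n. rewrite lac_coef_index, Cmod_pow, <- pow_mult, Nat.mul_comm by exact Ha.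
    reflexivity.
  - intros k Hk. rewrite lac_coef_off, Cmod_0 by exact Hk. unfold Rdiv. ring.
  - apply weighted_sq_nonneg; [exact Homega|]. apply lac_coef_lt. lia.
Qed.

Lemma ex_series_lac_coef_disk (a : nat) (mu : C) (r : R) :
  (1 <= a)%nat -> 0 <= r < 1 -> ex_series (fun k => Cmod (lac_coef a mu k) * r ^ k).
Proof.
  intros Ha Hr.
  apply (ex_series_sparse_iff (fun n => a * 2 ^ n)%nat _ (fun n => Cmod mu ^ n * r ^ (a * 2 ^ n))).
  - intros n p. now apply lac_index_lt.
  - intros n. now rewrite lac_coef_index, Cmod_pow.
  - intros k Hk. rewrite lac_coef_off, Cmod_0 by exact Hk. ring.
  - intros k. apply Rmult_le_pos; [apply Cmod_ge_0 | apply pow_le; lra].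
  - apply ex_series_superexp; [apply Cmod_ge_0 | exact Hr |].
    intros n. now apply lac_index_ge.
Qed.

Lemma hcoef_S (m : nat) (mu : C) (k : nat) : (1 <= m)%nat ->
  hcoef m mu k = (lac_coef (6 * m + 4) mu k - lac_coef (2 * m + 1) mu k)%C.
Proof. now destruct m; [lia|]. Qed.

Lemma hcoef_lt3 (m : nat) (mu : C) (k : nat) : (k < 3)%nat -> hcoef m mu k = 0.
Proof.
  intros Hk. destruct m as [|m'].
  - apply lac_coef_lt. lia.
  - rewrite hcoef_S, !lac_coef_lt by lia. ring.
Qed.

Lemma mul_pow2_cancel (x y i j : nat) :
  (j <= i)%nat -> (x * 2 ^ i = y * 2 ^ j)%nat -> (x * 2 ^ (i - j) = y)%nat.
Proof.
  intros Hji E. apply (Nat.mul_cancel_r _ _ (2 ^ j)); [apply Nat.pow_nonzero; lia|].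
  now rewrite <- Nat.mul_assoc, <- Nat.pow_add_r, Nat.sub_add.
Qed.

(* [6m + 4 = 2 (3m + 2)], and [3m + 2] is strictly between [2m + 1] and [2 (2m + 1)]. *)
Lemma progressions_disjoint (m n p : nat) :
  (1 <= m)%nat -> ((6 * m + 4) * 2 ^ n <> (2 * m + 1) * 2 ^ p)%nat.
Proof.
  intros Hm E.
  assert (E' : ((3 * m + 2) * 2 ^ S n = (2 * m + 1) * 2 ^ p)%nat)
    by (rewrite Nat.pow_succ_r', <- E; ring).
  destruct (Nat.le_gt_cases p (S n)) as [Hp|Hp].
  - apply mul_pow2_cancel in E'; [|exact Hp].
    destruct (S n - p)%nat as [|d]; [rewrite Nat.mul_1_r in E'; lia|].
    rewrite Nat.pow_succ_r' in E'. lia.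
  - symmetry in E'. apply mul_pow2_cancel in E'; [|lia].
    destruct (p - S n)%nat as [|d] eqn:Ed; [lia|].
    rewrite Nat.pow_succ_r' in E'. pose proof (Nat.pow_nonzero 2 d). nia.
Qed.

Lemma Cmod_hcoef_sq (m : nat) (mu : C) (k : nat) : (1 <= m)%nat ->
  Cmod (hcoef m mu k) ^ 2 =
  Cmod (lac_coef (2 * m + 1) mu k) ^ 2 + Cmod (lac_coef (6 * m + 4) mu k) ^ 2.
Proof.
  intros Hm. rewrite hcoef_S by exact Hm.
  destruct (classic (exists n, k = ((6 * m + 4) * 2 ^ n)%nat)) as [[n Hn]|Hoff].
  - rewrite (lac_coef_off (2 * m + 1)), Cmod_0
      by (intros p Hp; apply (progressions_disjoint m n p Hm); lia).
    replace (lac_coef (6 * m + 4) mu k - 0)%C with (lac_coef (6 * m + 4) mu k) by ring.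
    ring.
  - rewrite (lac_coef_off (6 * m + 4)), Cmod_0 by (intros p Hp; apply Hoff; now exists p).
    replace (0 - lac_coef (2 * m + 1) mu k)%C with (- lac_coef (2 * m + 1) mu k)%C by ring.
    rewrite Cmod_opp. ring.
Qed.

Lemma ex_series_hcoef_sq (omega : nat -> R) (m : nat) (mu : C) :
  (forall n, (0 < n)%nat -> 0 < omega n) ->
  ex_series (fun k => Cmod (hcoef m mu k) ^ 2 / omega k) <->
  (ex_series (fun n => Cmod mu ^ (2 * n) / omega ((2 * m + 1) * 2 ^ n)%nat) /\
   ex_series (fun n => Cmod mu ^ (2 * n) / omega ((6 * m + 4) * 2 ^ n)%nat)).
Proof.
  intros Homega. destruct m as [|m'].
  - rewrite (ex_series_lac_coef_sq omega 4 mu Homega) by lia.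
    split; [|now intros [_ H]].
    intros H. split; [|exact H]. exact (ex_series_weight_shift omega _ (2 * 0 + 1) 2 H).
  - set (m := S m'). assert (Hm : (1 <= m)%nat) by lia.
    rewrite <- (ex_series_lac_coef_sq omega (2 * m + 1) mu Homega) by lia.
    rewrite <- (ex_series_lac_coef_sq omega (6 * m + 4) mu Homega) by lia.
    rewrite <- ex_series_plus_nonneg_iff
      by (apply weighted_sq_nonneg; [exact Homega | apply lac_coef_lt; lia]).
    assert (Hsplit : forall k, Cmod (hcoef m mu k) ^ 2 / omega k =
      Cmod (lac_coef (2 * m + 1) mu k) ^ 2 / omega k
      + Cmod (lac_coef (6 * m + 4) mu k) ^ 2 / omega k).
    { intros k. rewrite Cmod_hcoef_sq by exact Hm. apply Rdiv_plus_distr. }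
    split; intros H; apply (@ex_series_ext R_AbsRing R_NormedModule) with (2 := H);
      intros k; [|symmetry]; apply Hsplit.
Qed.

Lemma ex_series_hcoef_disk (m : nat) (mu : C) (r : R) :
  0 <= r < 1 -> ex_series (fun k => Cmod (hcoef m mu k) * r ^ k).
Proof.
  intros Hr. destruct m as [|m'].
  - apply ex_series_lac_coef_disk; [lia | exact Hr].
  - set (m := S m'). assert (Hm : (1 <= m)%nat) by lia.
    apply (@ex_series_le R_AbsRing R_CompleteNormedModule) with
      (b := fun k => Cmod (lac_coef (6 * m + 4) mu k) * r ^ k
                     + Cmod (lac_coef (2 * m + 1) mu k) * r ^ k).
    + intros k. change norm with Rabs.
      assert (Hrk : 0 <= r ^ k) by (apply pow_le; lra).
      rewrite Rabs_pos_eq by (apply Rmult_le_pos; [apply Cmod_ge_0 | exact Hrk]).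
      rewrite hcoef_S by exact Hm. unfold Cminus.
      pose proof (Cmod_triangle (lac_coef (6 * m + 4) mu k) (- lac_coef (2 * m + 1) mu k)).
      rewrite Cmod_opp in *. nra.
    + apply (@ex_series_plus R_AbsRing R_NormedModule);
        apply ex_series_lac_coef_disk; lia || exact Hr.
Qed.

Lemma in_X_hcoef_iff (omega : nat -> R) (m : nat) (mu : C) :
  (forall n, (0 < n)%nat -> 0 < omega n) ->
  in_X omega (hcoef m mu) <->
  (ex_series (fun n => Cmod mu ^ (2 * n) / omega ((2 * m + 1) * 2 ^ n)%nat) /\
   ex_series (fun n => Cmod mu ^ (2 * n) / omega ((6 * m + 4) * 2 ^ n)%nat)).
Proof.
  intros Homega. rewrite <- ex_series_hcoef_sq by exact Homega. unfold in_X.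
  split; [now intros [_ [_ H]] |].
  intros H. split; [|split];
    [intros; now apply hcoef_lt3 | intros; now apply ex_series_hcoef_disk | exact H].
Qed.

Lemma collatzT_double (k : nat) : collatzT (2 * k) = k.
Proof.
  unfold collatzT. rewrite Nat.even_mul, Nat.mul_comm, Nat.div_mul; [reflexivity | lia].
Qed.

Lemma collatzT_odd (t : nat) : collatzT (2 * t + 1) = (3 * t + 2)%nat.
Proof.
  unfold collatzT. rewrite Nat.add_comm, Nat.even_add_mul_2.
  replace (3 * (1 + 2 * t) + 1)%nat with ((3 * t + 2) * 2)%nat by ring.
  apply Nat.div_mul. lia.
Qed.

Lemma collatzT_preimage (j k : nat) : collatzT j = k -> j = (2 * k)%nat \/ Nat.Odd j.
Proof.
  intros Hjk. destruct (Nat.Even_or_Odd j) as [[t ->]|Hodd]; [|now right].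
  left. now rewrite collatzT_double in Hjk; subst.
Qed.

Lemma collatzT_ge_half (j : nat) : (j <= 2 * collatzT j)%nat.
Proof.
  destruct (Nat.Even_or_Odd j) as [[t ->]|[t ->]].
  - rewrite collatzT_double. lia.
  - rewrite collatzT_odd. lia.
Qed.

(* The [T]-preimages of [k] are [2k] and possibly one odd number; if the only odd index
   where [c] may be nonzero is [j0], at most the two terms [2k] and [j0] survive. *)
Lemma Top_odd_support (c : nat -> C) (k j0 : nat) :
  (3 <= k)%nat -> (3 <= j0)%nat -> Nat.Odd j0 ->
  (forall j, Nat.Odd j -> j <> j0 -> c j = 0) ->
  Top c k = (c (2 * k)%nat + if (collatzT j0 =? k)%nat then c j0 else 0)%C.
Proof.
  intros Hk Hj0 Hodd Hc. unfold Top.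
  replace (k <? 3)%nat with false by (symmetry; apply Nat.ltb_ge; lia).
  set (f := fun j => if andb (3 <=? j)%nat (collatzT j =? k)%nat then c j else RtoC 0).
  assert (f_double : f (2 * k)%nat = c (2 * k)%nat).
  { unfold f. rewrite collatzT_double, Nat.eqb_refl.
    now replace (3 <=? 2 * k)%nat with true by (symmetry; apply Nat.leb_le; lia). }
  assert (f_j0 : f j0 = if (collatzT j0 =? k)%nat then c j0 else 0).
  { unfold f. now replace (3 <=? j0)%nat with true by (symmetry; apply Nat.leb_le; lia). }
  assert (f_other : forall j, j <> (2 * k)%nat -> j <> j0 -> f j = 0).
  { intros j Hj2k Hjj0. unfold f.
    destruct (3 <=? j)%nat; destruct (Nat.eqb_spec (collatzT j) k) as [E|E]; try reflexivity.
    destruct (collatzT_preimage j k E) as [|Hj]; [easy | now apply Hc]. }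
  destruct (Nat.eqb_spec (collatzT j0) k) as [E|E].
  - assert (Hj0k : (j0 <= 2 * k)%nat) by (rewrite <- E; apply collatzT_ge_half).
    assert (Hne : (2 * k)%nat <> j0) by (intros <-; destruct Hodd; lia).
    rewrite (sum_n_pair f _ (2 * k) j0), f_double, f_j0;
      [reflexivity | lia | exact Hj0k | exact Hne |].
    intros j _ Hj2k Hjj0. now apply f_other.
  - rewrite (sum_n_single f _ (2 * k)), f_double; [ring | lia |].
    intros j _ Hj2k. destruct (Nat.eq_dec j j0) as [->|Hjj0].
    + exact f_j0.
    + now apply f_other.
Qed.

Lemma Top_hcoef (m : nat) (mu : C) (k : nat) : Top (hcoef m mu) k = (mu * hcoef m mu k)%C.
Proof.
  destruct (Nat.lt_ge_cases k 3) as [Hk|Hk].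
  { unfold Top. replace (k <? 3)%nat with true by (symmetry; now apply Nat.ltb_lt).
    rewrite hcoef_lt3 by exact Hk. ring. }
  destruct m as [|m'].
  - change (hcoef 0 mu) with (lac_coef 4 mu).
    rewrite (Top_odd_support _ k 3), lac_coef_double, (lac_coef_lt 4 mu 3); try lia.
    + now destruct (collatzT 3 =? k)%nat; ring.
    + now exists 1%nat.
    + intros j Hj _. apply lac_coef_odd; [exact Hj|]. intros ->. destruct Hj; lia.
  - set (m := S m'). assert (Hm : (1 <= m)%nat) by lia.
    rewrite (Top_odd_support _ k (2 * m + 1)); try lia; [| now exists m |].
    2:{ intros j Hj Hjm. rewrite hcoef_S, !lac_coef_odd by (exact Hm || exact Hj || exact Hjm ||
          (intros ->; destruct Hj; lia)). ring. }
    rewrite collatzT_odd, !hcoef_S, lac_coef_base, (lac_coef_lt (6 * m + 4) mu (2 * m + 1)) by lia.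
    destruct (Nat.eqb_spec (3 * m + 2) k) as [<-|Hk'].
    + rewrite (lac_coef_lt (6 * m + 4) mu (3 * m + 2)) by lia.
      replace (2 * (3 * m + 2))%nat with (6 * m + 4)%nat by ring.
      rewrite lac_coef_base by lia.
      rewrite (lac_coef_off (2 * m + 1) mu (6 * m + 4))
        by (intros p Hp; apply (progressions_disjoint m 0 p Hm); now rewrite Nat.mul_1_r).
      rewrite (lac_coef_off (2 * m + 1) mu (3 * m + 2))
        by (intros p Hp; apply (progressions_disjoint m 0 (S p) Hm);
            rewrite Nat.mul_1_r, Nat.pow_succ_r', (Nat.mul_comm 2 (2 ^ p)), Nat.mul_assoc, <- Hp;
            ring).
      ring.
    + rewrite !lac_coef_double by lia. ring.
Qed.

Lemma ex_series_lac_weight_bounded_below (omega : nat -> R) (b q : R) (a : nat) :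
  0 < b -> (forall n, (0 < n)%nat -> b <= omega n) -> (1 <= a)%nat -> 0 <= q < 1 ->
  ex_series (fun n => q ^ (2 * n) / omega (a * 2 ^ n)%nat).
Proof.
  intros Hb Hlow Ha Hq. apply (ex_series_geom_weight _ _ _ b 1); [exact Hb | lra | nra |].
  intros n. rewrite pow1, Rmult_1_r. apply Hlow.
  pose proof (lac_index_ge a n Ha). pose proof (Nat.pow_nonzero 2 n). lia.
Qed.

Lemma omega0_pos (n : nat) : 0 < omega0 n.
Proof. apply Rdiv_lt_0_compat; [apply lt_0_INR; lia | apply PI_RGT_0]. Qed.

Lemma ex_series_lac_weight_omega0 (q : R) (a : nat) :
  (1 <= a)%nat -> 0 <= q < sqrt 2 ->
  ex_series (fun n => q ^ (2 * n) / omega0 (a * 2 ^ n)%nat).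
Proof.
  intros Ha Hq. pose proof PI_RGT_0 as Hpi.
  apply (ex_series_geom_weight _ _ _ (/ PI) 2); [now apply Rinv_0_lt_compat | lra | |].
  - rewrite <- (pow2_sqrt 2) by lra. nra.
  - intros n. unfold omega0, Rdiv. rewrite Rmult_comm.
    apply Rmult_le_compat_r; [now apply Rlt_le, Rinv_0_lt_compat|].
    replace 2 with (INR 2) by (simpl; lra). rewrite <- pow_INR.
    apply le_INR. pose proof (lac_index_ge a n Ha). lia.
Qed.

Theorem proposition2p3 (omega : nat -> R)
  (Homega : forall n : nat, (0 < n)%nat -> 0 < omega n) :
  (forall (m : nat) (mu : C),
     (in_X omega (hcoef m mu) <->
        (ex_series (fun n => Cmod mu ^ (2 * n) / omega ((2 * m + 1) * 2 ^ n)%nat) /\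
         ex_series (fun n => Cmod mu ^ (2 * n) / omega ((6 * m + 4) * 2 ^ n)%nat))) /\
     (in_X omega (hcoef m mu) ->
        forall k : nat, Top (hcoef m mu) k = Cmult mu (hcoef m mu k))) /\
  ((exists b : R, 0 < b /\ forall n : nat, (0 < n)%nat -> b <= omega n) ->
     forall (m : nat) (mu : C), Cmod mu < 1 -> in_X omega (hcoef m mu)) /\
  (forall (m : nat) (mu : C), Cmod mu < sqrt 2 -> in_X omega0 (hcoef m mu)).
Proof.
  split; [|split].
  - intros m mu. split; [now apply in_X_hcoef_iff | intros _ k; apply Top_hcoef].
  - intros [b [Hb Hlow]] m mu Hmu. apply in_X_hcoef_iff; [exact Homega|].
    pose proof (Cmod_ge_0 mu).
    split; apply (ex_series_lac_weight_bounded_below omega b); (assumption || lia || lra).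
  - intros m mu Hmu. apply in_X_hcoef_iff; [intros n _; apply omega0_pos|].
    pose proof (Cmod_ge_0 mu).
    split; apply ex_series_lac_weight_omega0; (lia || lra).
Qed.
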